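(* For a graph $G$, $\gamma_{(2,2,2)}(G)=4$ if and only if at least one of the following holds: (i) $\gamma_{\times2,t}(G)=4$; (ii) $\gamma_t(G)=2$ and $G$ has minimum degree $\delta=1$; (iii) $\gamma_t(G)=2$ and $\gamma_{\times2,t}(G)\ge4$.
   Context: All graphs are finite and simple; $N(v)$ is the open neighbourhood. $\gamma_{(2,2,2)}(G)$ is the minimum of $\sum_v f(v)$ over functions $f:V(G)\to\{0,1,2\}$ with $\sum_{u\in N(v)}f(u)\ge2$ for every vertex $v$ (defined when $G$ has no isolated vertex). $\gamma_t(G)$ is the total domination number (minimum size of $S$ such that every vertex has a neighbour in $S$). $\gamma_{\times2,t}(G)$ is the minimum size of $S\subseteq V(G)$ such that every vertex has at least two neighbours in $S$ (defined when $G$ has minimum degree at least $2$). *)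

From mathcomp Require Import all_boot.
Set Implicit Arguments. Unset Strict Implicit. Unset Printing Implicit Defensive.

(* A finite simple graph: vertex type T : finType, adjacency e : rel T,
   assumed symmetric and irreflexive in the theorem. *)
Section Graph.
Variables (T : finType) (e : rel T).

Definition nbhd (v : T) : {set T} := [set u | e v u].
Definition deg (v : T) : nat := #|nbhd v|.
(* minimum degree delta(G) (for the empty graph this is 0) *)
Definition min_deg : nat := \big[minn/#|T|]_(v : T) deg v.
Definition no_isolated : Prop := forall v : T, exists u, e v u.

Definition weight (f : {ffun T -> 'I_3}) : nat := \sum_(v : T) (f v : nat).
Definition is_222_dom (f : {ffun T -> 'I_3}) : bool :=
  [forall v : T, 2 <= \sum_(u in nbhd v) (f u : nat)].
(* the constant-2 function is feasible when G has no isolated vertex,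
   so the default 2*|V| does not affect the minimum there *)
Definition gamma222 : nat :=
  \big[minn/(2 * #|T|)]_(f : {ffun T -> 'I_3} | is_222_dom f) weight f.

Definition is_tdom (S : {set T}) : bool := [forall v : T, #|nbhd v :&: S| >= 1].
Definition gamma_t : nat := \big[minn/#|T|]_(S : {set T} | is_tdom S) #|S|.

Definition is_dtdom (S : {set T}) : bool := [forall v : T, #|nbhd v :&: S| >= 2].
(* only meaningful when min_deg >= 2 (then V itself is feasible) *)
Definition gamma_x2t : nat := \big[minn/#|T|]_(S : {set T} | is_dtdom S) #|S|.

End Graph.

From mathcomp Require Import all_boot zify.
Set Implicit Arguments.
Unset Strict Implicit.
Unset Printing Implicit Defensive.

(* A (2,2,2)-dominating function f either takes the value 2 somewhere or is
   0/1-valued.  If f a = 2 then a, which is not its own neighbour, adds 2 to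
   the at least 2 collected on N(a), so the weight is at least 4; when it is
   exactly 4, a together with a neighbour b with f b > 0 totally dominates G,
   since any vertex seeing neither a nor b would collect at most 1.  If f is
   0/1-valued, its support is a double total dominating set of size weight f.
   Conversely 2 * 1_S and 1_S are (2,2,2)-dominating for a total, resp. double
   total, dominating set S.  Hence gamma222 <= 3 iff some double total
   dominating set has at most 3 vertices, and gamma222 <= 4 iff gamma_t <= 2
   or some double total dominating set has at most 4 vertices.  Double total
   dominating sets exist exactly when the minimum degree is at least 2, and
   then their minimum size is gamma_x2t. *)

Section BigMinNat.
Variables (I : finType) (P : pred I) (F : I -> nat) (d : nat).

Lemma bigmin_leq_id : \big[minn/d]_(i | P i) F i <= d.
Proof. by elim/big_rec: _ => // i m _ le_m_d; rewrite geq_min le_m_d orbT. Qed.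

Lemma bigmin_leq_cond j k : P j -> F j <= k -> \big[minn/d]_(i | P i) F i <= k.
Proof.
move=> Pj Fj_le_k; rewrite unlock.
elim: (index_enum I) (mem_index_enum j) => //= i r IH.
rewrite inE => /predU1P [<-|/IH le_k]; first by rewrite Pj geq_min Fj_le_k.
by case: (P i) => //; rewrite geq_min le_k orbT.
Qed.

Lemma bigmin_leq_exists i0 k : P i0 -> F i0 <= d ->
  (\big[minn/d]_(i | P i) F i <= k) = [exists i, P i && (F i <= k)].
Proof.
move=> Pi0 Fi0_le_d; apply/idP/existsP => [le_min_k|[i /andP [Pi]]]; last first.
  exact: bigmin_leq_cond.
have /orP [le_d_k|/existsP //] : (d <= k) || [exists i, P i && (F i <= k)].
  move: le_min_k; elim/big_rec: _ => [-> //|i m Pi IH].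
  rewrite geq_min => /orP [Fi_le_k|/IH //].
  by apply/orP; right; apply/existsP; exists i; rewrite Pi.
by exists i0; rewrite Pi0 (leq_trans Fi0_le_d).
Qed.

End BigMinNat.

Section Domination.
Variables (T : finType) (e : rel T).
Hypothesis e_irr : irreflexive e.
Hypothesis noiso : no_isolated e.

Definition has_tdom_le k := [exists S, is_tdom e S && (#|S| <= k)].
Definition has_dtdom_le k := [exists S, is_dtdom e S && (#|S| <= k)].

Lemma notin_nbhd v : v \notin nbhd e v.
Proof. by rewrite inE e_irr. Qed.

Lemma sum_leq_weight (f : {ffun T -> 'I_3}) (A : {set T}) :
  \sum_(u in A) f u <= weight f.
Proof. by rewrite /weight [X in _ <= X](bigID (mem A)) leq_addr. Qed.

Definition indicator (c : nat) (S : {set T}) : {ffun T -> 'I_3} :=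
  [ffun u => inord (c * (u \in S))].

Lemma indicatorE c S u : c <= 2 -> indicator c S u = c * (u \in S) :> nat.
Proof. by move=> c_le2; rewrite ffunE inordK //; case: (u \in S); lia. Qed.

Lemma sum_indicator c S (A : {set T}) : c <= 2 ->
  \sum_(u in A) indicator c S u = c * #|A :&: S|.
Proof.
move=> c_le2; rewrite -sum1_card big_distrr /= big_mkcond [RHS]big_mkcond.
apply: eq_bigr => u _; rewrite indicatorE // in_setI.
by case: (u \in A) (u \in S) => [] []; rewrite /= ?muln0.
Qed.

Lemma weight_indicator c S : c <= 2 -> weight (indicator c S) = c * #|S|.
Proof.
move=> c_le2; rewrite -[S in RHS]setTI -sum_indicator //.
by apply: eq_bigl => u; rewrite in_setT.
Qed.

Lemma is_222_dom_tdom S : is_tdom e S -> is_222_dom e (indicator 2 S).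
Proof.
move=> /forallP S_tdom; apply/forallP => v.
by rewrite sum_indicator //; have := S_tdom v; lia.
Qed.

Lemma is_222_dom_dtdom S : is_dtdom e S -> is_222_dom e (indicator 1 S).
Proof.
move=> /forallP S_dtdom; apply/forallP => v.
by rewrite sum_indicator //; have := S_dtdom v; lia.
Qed.

Lemma ffun_two_or_le1 (f : {ffun T -> 'I_3}) :
  (exists a, f a = 2 :> nat) \/ (forall u, f u <= 1).
Proof.
have [/existsP [a /eqP fa2]|/existsPn f_ne2] :=
  boolP [exists a, f a == 2 :> nat].
  by left; exists a.
by right=> u; have := f_ne2 u; have := ltn_ord (f u); lia.
Qed.

Lemma weight_ge4_of_two f a :
  is_222_dom e f -> f a = 2 :> nat -> 4 <= weight f.
Proof.
move=> /forallP f_dom fa2; have := sum_leq_weight f (a |: nbhd e a).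
by rewrite big_setU1 ?notin_nbhd //= fa2; have := f_dom a; lia.
Qed.

Lemma has_tdom_le2_of_two f a :
  is_222_dom e f -> f a = 2 :> nat -> weight f <= 4 -> has_tdom_le 2.
Proof.
move=> /forallP f_dom fa2 w_le4.
have [b ab fb_gt0] : exists2 b, b \in nbhd e a & 0 < f b.
  have : 0 < \sum_(u in nbhd e a) f u by have := f_dom a; lia.
  rewrite lt0n sum_nat_eq0 negb_forall_in => /exists_inP [b ab fb].
  by exists b; rewrite ?lt0n.
have a_neq_b : a != b by apply: contraTneq ab => <-; apply: notin_nbhd.
apply/existsP; exists [set a; b]; rewrite cards2 a_neq_b andbT.
apply/forallP => v; rewrite card_gt0; apply/set0Pn.
have [va|nva] := boolP (e v a); first by exists a; rewrite !inE va eqxx.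
have [vb|nvb] := boolP (e v b); first by exists b; rewrite !inE vb eqxx orbT.
have := sum_leq_weight f (a |: (b |: nbhd e v)).
rewrite !big_setU1 ?inE ?negb_or ?a_neq_b ?nva ?nvb //= fa2.
by have := f_dom v; lia.
Qed.

Lemma dtdom_of_le1 f : is_222_dom e f -> (forall u, f u <= 1) ->
  exists2 S, is_dtdom e S & #|S| = weight f.
Proof.
move=> /forallP f_dom f_le1; set S := [set u | f u != 0 :> nat].
have f_ind : f = indicator 1 S.
  apply/ffunP => u; apply/val_inj; rewrite /= indicatorE // inE mul1n.
  by have := f_le1 u; case: (nat_of_ord (f u)) => [|[]].
exists S; last by rewrite f_ind weight_indicator // mul1n.
by apply/forallP => v; have := f_dom v; rewrite f_ind sum_indicator //; lia.
Qed.

Lemma tdom_setT : is_tdom e [set: T].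
Proof.
apply/forallP => v; rewrite setIT card_gt0; apply/set0Pn.
by have [u vu] := noiso v; exists u; rewrite inE.
Qed.

Lemma gamma222_leq k :
  (gamma222 e <= k) = [exists f, is_222_dom e f && (weight f <= k)].
Proof.
apply: (bigmin_leq_exists (i0 := indicator 2 [set: T])).
  exact/is_222_dom_tdom/tdom_setT.
by rewrite weight_indicator // cardsT.
Qed.

Lemma gamma222_leq3 : (gamma222 e <= 3) = has_dtdom_le 3.
Proof.
rewrite gamma222_leq; apply/existsP/existsP.
  move=> [f /andP [f_dom w_le3]].
  have [[a fa2]|f_le1] := ffun_two_or_le1 f.
    by have := weight_ge4_of_two f_dom fa2; lia.
  have [S S_dtdom S_card] := dtdom_of_le1 f_dom f_le1.
  by exists S; rewrite S_dtdom S_card.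
move=> [S /andP [S_dtdom S_le3]]; exists (indicator 1 S).
by rewrite is_222_dom_dtdom // weight_indicator // mul1n.
Qed.

Lemma gamma222_leq4 : (gamma222 e <= 4) = has_tdom_le 2 || has_dtdom_le 4.
Proof.
rewrite gamma222_leq; apply/existsP/orP.
  move=> [f /andP [f_dom w_le4]].
  have [[a fa2]|f_le1] := ffun_two_or_le1 f.
    by left; apply: has_tdom_le2_of_two f_dom fa2 w_le4.
  have [S S_dtdom S_card] := dtdom_of_le1 f_dom f_le1.
  by right; apply/existsP; exists S; rewrite S_dtdom S_card.
move=> [/existsP [S /andP [S_tdom S_le2]]|/existsP [S /andP [S_dtdom S_le4]]].
  exists (indicator 2 S).
  by rewrite is_222_dom_tdom // weight_indicator //; lia.
exists (indicator 1 S).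
by rewrite is_222_dom_dtdom // weight_indicator // mul1n.
Qed.

Lemma gamma_t_leq k : (gamma_t e <= k) = has_tdom_le k.
Proof. exact: (bigmin_leq_exists (i0 := [set: T])) tdom_setT (max_card _). Qed.

Lemma tdom_card_ge2 (v0 : T) S : is_tdom e S -> 2 <= #|S|.
Proof.
move=> /forallP S_tdom.
have /card_gt0P [x /setIP [_ xS]] := S_tdom v0.
have /card_gt0P [y /setIP [xy yS]] := S_tdom x.
have x_neq_y : x != y by apply: contraTneq xy => <-; apply: notin_nbhd.
have /subset_leq_card : [set x; y] \subset S.
  by apply/subsetP => z /set2P [->|->].
by rewrite cards2 x_neq_y.
Qed.

Lemma gamma_t_gt1 (v0 : T) : 1 < gamma_t e.
Proof.
rewrite ltnNge gamma_t_leq; apply/existsP => -[S /andP [S_tdom S_le1]].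
by have := tdom_card_ge2 v0 S_tdom; lia.
Qed.

Lemma min_deg_leq (v0 : T) k : (min_deg e <= k) = [exists v, deg e v <= k].
Proof. exact: (bigmin_leq_exists (i0 := v0)) (max_card _). Qed.

Lemma min_deg_gt0 (v0 : T) : 0 < min_deg e.
Proof.
rewrite ltnNge (min_deg_leq v0); apply/existsP => -[v].
have [u vu] := noiso v; rewrite leqn0 => /eqP/card0_eq/(_ u).
by rewrite inE vu.
Qed.

Lemma dtdom_min_deg (v0 : T) S : is_dtdom e S -> 1 < min_deg e.
Proof.
move=> /forallP S_dtdom; rewrite ltnNge (min_deg_leq v0); apply/existsP => -[v].
have := subset_leq_card (subsetIl (nbhd e v) S).
by have := S_dtdom v; rewrite /deg; lia.
Qed.

Lemma gamma_x2t_leq k : 1 < min_deg e -> (gamma_x2t e <= k) = has_dtdom_le k.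
Proof.
move=> min_deg_gt1; apply: (bigmin_leq_exists (i0 := [set: T])) (max_card _).
apply/forallP => v; rewrite setIT.
exact: leq_trans min_deg_gt1 (bigmin_leq_cond _ _ (leqnn (deg e v))).
Qed.

End Domination.

Theorem theorem18 (T : finType) (e : rel T)
  (e_sym : symmetric e) (e_irr : irreflexive e)
  (noiso : no_isolated e) :
  gamma222 e = 4 <->
  [\/ (2 <= min_deg e /\ gamma_x2t e = 4),
      (gamma_t e = 2 /\ min_deg e = 1)
    | (gamma_t e = 2 /\ 2 <= min_deg e /\ 4 <= gamma_x2t e)].
Proof.
have [v0 _|T_empty] := pickP (@predT T); last first.
  have T0 : #|T| = 0 := eq_card0 T_empty.
  have : gamma222 e <= 2 * #|T| := bigmin_leq_id _ _ _.
  have : gamma_t e <= #|T| := bigmin_leq_id _ _ _.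
  have : gamma_x2t e <= #|T| := bigmin_leq_id _ _ _.
  by split=> [|[]]; lia.
have g222_le4 := gamma222_leq4 e_irr noiso.
have g222_le3 := gamma222_leq3 e_irr noiso.
rewrite -(gamma_t_leq noiso) in g222_le4.
have t_gt1 := gamma_t_gt1 e_irr noiso v0; have d_gt0 := min_deg_gt0 noiso v0.
have [d_ge2|d_lt2] := leqP 2 (min_deg e).
  rewrite -!(gamma_x2t_leq _ d_ge2) in g222_le3 g222_le4.
  split=> [?|[]]; try lia.
  by have [x4|x4] := eqVneq (gamma_x2t e) 4; [apply: Or31|apply: Or33]; lia.
have no_dtdom k : has_dtdom_le e k = false.
  by apply/existsP => -[S /andP [/(dtdom_min_deg v0)]]; lia.
rewrite !no_dtdom orbF in g222_le3 g222_le4.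
by split=> [?|[]]; try lia; apply: Or32; lia.
Qed.
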